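(* Let $G$ be a baseline cdf with density $g$, let $\theta>0$, $\lambda\in\mathbb{R}\setminus\{0\}$, and let $0<\alpha_1<\alpha_2$. If $X\sim\mathrm{GMOP\text{-}G}(\theta,\alpha_1,\lambda)$ and $Y\sim\mathrm{GMOP\text{-}G}(\theta,\alpha_2,\lambda)$ (same baseline $G$), then $X\le_{lr}Y$.
   Context: With $\bar\alpha=1-\alpha$, the $\mathrm{GMOP\text{-}G}(\theta,\alpha,\lambda)$ distribution (parameters $\theta>0$, $\alpha>0$, $\lambda\in\mathbb{R}\setminus\{0\}$, baseline cdf $G$ with density $g$) has pdf $$f(t)=\frac{\theta\lambda\alpha^{\theta}(1-e^{-\lambda})g(t)e^{-\lambda G(t)}\left(e^{-\lambda G(t)}-e^{-\lambda}\right)^{\theta-1}}{\left(1-\alpha e^{-\lambda}-\bar\alpha e^{-\lambda G(t)}\right)^{\theta+1}}.$$ For random variables $X$, $Y$ with densities $f_X$, $f_Y$, $X$ is smaller than $Y$ in the likelihood ratio order, $X\le_{lr}Y$, if $f_X(t)/f_Y(t)$ is decreasing in $t$ (on the set where the densities are positive). *)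

From HB Require Import structures.
From mathcomp Require Import all_boot all_order all_algebra.
From mathcomp Require Import all_classical all_reals all_analysis.
Set Implicit Arguments. Unset Strict Implicit. Unset Printing Implicit Defensive.
Import Order.TTheory GRing.Theory Num.Theory.
Import numFieldNormedType.Exports.
Local Open Scope classical_set_scope.
Local Open Scope ring_scope.

Definition cdf_with_density (R : realType) (G g : R -> R) : Prop :=
  (forall x, 0 <= g x) /\
  measurable_fun setT g /\
  (\int[@lebesgue_measure R]_(x in [set: R]) (g x)%:E = 1)%E /\
  (forall t, ((G t)%:E = \int[@lebesgue_measure R]_(x in `]-oo, t]) (g x)%:E)%E).

(* pdf of GMOP-G(theta, alpha, lambda).  The factors
   (e^{-lG}-e^{-l})^{theta-1} / (1 - a e^{-l} - (1-a) e^{-lG})^{theta+1}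
   are read as |.|^(theta-1) / |.|^(theta+1). *)
Definition gmop_pdf (R : realType) (G g : R -> R) (theta alpha lambda : R)
    (t : R) : R :=
  let A := expR (- lambda * G t) - expR (- lambda) in
  let D := 1 - alpha * expR (- lambda) - (1 - alpha) * expR (- lambda * G t) in
  theta * lambda * (alpha `^ theta) * (1 - expR (- lambda)) * g t
    * expR (- lambda * G t) * (`|A| `^ (theta - 1))
    / (`|D| `^ (theta + 1)).

Definition lr_le (R : realType) (fX fY : R -> R) : Prop :=
  forall s t, s <= t ->
    0 < fX s -> 0 < fY s -> 0 < fX t -> 0 < fY t ->
    fX t / fY t <= fX s / fY s.

(* Write c = e^-lambda and H t = (1 - e^(-lambda G t)) / (1 - c), a cdf with
   values in [0, 1] that is nondecreasing in t.  Then
   1 - a c - (1 - a) e^(-lambda G t) = (1 - c) (a + (1 - a) H t), so the only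
   dependence of the pdf on alpha is alpha^theta / (alpha + (1 - alpha) H t)^(theta + 1).
   Hence f1/f2 = (alpha1/alpha2)^theta * q(H t)^(theta + 1) with
   q(h) = (alpha2 + (1 - alpha2) h) / (alpha1 + (1 - alpha1) h), a Moebius map
   that is nonincreasing on [0, 1] when alpha1 < alpha2. *)
From mathcomp Require Import all_boot all_order all_algebra.
From mathcomp Require Import all_classical all_reals all_analysis.
From mathcomp Require Import measurable_realfun.
From mathcomp Require Import ring lra.
Import Order.TTheory GRing.Theory Num.Theory.
Local Open Scope ring_scope.

Section CdfWithDensity.
Context {R : realType} {G g : R -> R}.
Hypothesis cdfG : cdf_with_density G g.

Let mu := @lebesgue_measure R.

Let integral_g_subset (A B : set R) : measurable A -> measurable B ->
  (A `<=` B)%classic ->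
  (\int[mu]_(x in A) (g x)%:E <= \int[mu]_(x in B) (g x)%:E)%E.
Proof.
case: cdfG => g_ge0 [mg _] mA mB AB.
apply: ge0_subset_integral => //; last by move=> x _; rewrite lee_fin.
by apply/measurable_EFinP; apply: measurable_funS mg.
Qed.

Lemma cdf_with_density_ge0 t : 0 <= G t.
Proof.
case: cdfG => g_ge0 [_ [_ GE]]; rewrite -lee_fin GE.
by apply: integral_ge0 => x _; rewrite lee_fin.
Qed.

Lemma cdf_with_density_le1 t : G t <= 1.
Proof.
case: cdfG => _ [_ [int1 GE]].
by rewrite -lee_fin GE -int1; apply: integral_g_subset.
Qed.

Lemma cdf_with_density_nondecreasing s t : s <= t -> G s <= G t.
Proof.
case: cdfG => _ [_ [_ GE]] st; rewrite -lee_fin !GE.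
apply: integral_g_subset => // x /=; rewrite !in_itv /= => xs.
exact: le_trans xs st.
Qed.

End CdfWithDensity.

Section ExpPowR.
Context {R : realType}.

Lemma powR_div (x y r : R) : 0 <= x -> 0 <= y -> (x / y) `^ r = x `^ r / y `^ r.
Proof.
move=> x_ge0 y_ge0.
by rewrite powRM ?invr_ge0 // -powR_inv1 // -powRrM mulN1r powRN.
Qed.

Lemma sgr_expRB (a b : R) : Num.sg (expR a - expR b) = Num.sg (a - b).
Proof.
case: (ltgtP a b) => [ab|ba|->]; last by rewrite !subrr.
- by rewrite !ltr0_sg // subr_lt0 // ltr_expR.
- by rewrite !gtr0_sg // subr_gt0 // ltr_expR.
Qed.

Lemma expRB_div_ge0 (a b c d : R) : 0 <= (a - b) * (c - d) ->
  0 <= (expR a - expR b) / (expR c - expR d).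
Proof. by move=> h; rewrite -sgr_ge0 sgrM sgrV !sgr_expRB -sgrM sgr_ge0. Qed.

End ExpPowR.

Section PoissonCdf.
Context {R : realType}.

Definition poisson_cdf (lambda y : R) : R :=
  (1 - expR (- lambda * y)) / (1 - expR (- lambda)).

Lemma poisson_cdf_ge0 (lambda y : R) : 0 <= y -> 0 <= poisson_cdf lambda y.
Proof.
move=> y_ge0; rewrite /poisson_cdf -expR0; apply: expRB_div_ge0.
have -> : (0 - - lambda * y) * (0 - - lambda) = lambda ^+ 2 * y by ring.
by rewrite mulr_ge0 ?sqr_ge0.
Qed.

Lemma subr1_expRN_neq0 (lambda : R) : lambda != 0 -> 1 - expR (- lambda) != 0.
Proof. by move=> lambda_neq0; rewrite -expR0 -sgr_eq0 sgr_expRB sgr_eq0 sub0r opprK. Qed.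

Lemma poisson_cdf_le1 (lambda y : R) : lambda != 0 -> y <= 1 ->
  poisson_cdf lambda y <= 1.
Proof.
move=> /subr1_expRN_neq0 c_neq1 y_le1; rewrite -subr_ge0.
have -> : 1 - poisson_cdf lambda y
    = (expR (- lambda * y) - expR (- lambda * 1)) / (expR 0 - expR (- lambda)).
  by rewrite /poisson_cdf expR0 mulr1; field.
apply: expRB_div_ge0.
have -> : (- lambda * y - - lambda * 1) * (0 - - lambda) = lambda ^+ 2 * (1 - y).
  by ring.
by rewrite mulr_ge0 ?sqr_ge0 // subr_ge0.
Qed.

Lemma poisson_cdf_nondecreasing (lambda y z : R) : y <= z ->
  poisson_cdf lambda y <= poisson_cdf lambda z.
Proof.
move=> yz; rewrite -subr_ge0.
have -> : poisson_cdf lambda z - poisson_cdf lambda y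
    = (expR (- lambda * y) - expR (- lambda * z)) / (expR 0 - expR (- lambda)).
  by rewrite /poisson_cdf expR0 -mulrBl; congr (_ / _); ring.
apply: expRB_div_ge0.
have -> : (- lambda * y - - lambda * z) * (0 - - lambda) = lambda ^+ 2 * (z - y).
  by ring.
by rewrite mulr_ge0 ?sqr_ge0 // subr_ge0.
Qed.

End PoissonCdf.

Section MarshallOlkin.
Context {R : realType}.

Definition mo_denom (alpha h : R) : R := alpha + (1 - alpha) * h.

Lemma mo_denom_gt0 (alpha h : R) : 0 < alpha -> 0 <= h <= 1 ->
  0 < mo_denom alpha h.
Proof. rewrite /mo_denom => alpha_gt0 /andP[h_ge0 h_le1]; nra. Qed.

Lemma mo_denom_ratio_nonincreasing (alpha1 alpha2 h k : R) :
  0 < alpha1 -> alpha1 <= alpha2 -> 0 <= h -> h <= k -> k <= 1 ->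
  mo_denom alpha2 k / mo_denom alpha1 k <= mo_denom alpha2 h / mo_denom alpha1 h.
Proof.
move=> alpha1_gt0 alpha12 h_ge0 hk k_le1.
have alpha2_gt0 := lt_le_trans alpha1_gt0 alpha12.
have k_ge0 := le_trans h_ge0 hk; have h_le1 := le_trans hk k_le1.
rewrite ler_pdivrMr ?mo_denom_gt0 ?h_ge0 ?k_ge0 // mulrAC.
rewrite ler_pdivlMr ?mo_denom_gt0 ?h_ge0 ?k_ge0 // -subr_ge0.
have -> : mo_denom alpha2 h * mo_denom alpha1 k - mo_denom alpha2 k * mo_denom alpha1 h
    = (alpha2 - alpha1) * (k - h) by rewrite /mo_denom; ring.
by rewrite mulr_ge0 // subr_ge0.
Qed.

End MarshallOlkin.

Section GmopPdf.
Variables (R : realType) (G g : R -> R) (theta lambda : R).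
Hypotheses (cdfG : cdf_with_density G g) (lambda_neq0 : lambda != 0).

Local Notation H t := (poisson_cdf lambda (G t)).

Let H_in01 t : 0 <= H t <= 1.
Proof.
rewrite poisson_cdf_ge0 ?poisson_cdf_le1 //.
- exact: cdf_with_density_le1 cdfG t.
- exact: cdf_with_density_ge0 cdfG t.
Qed.

Lemma gmop_pdf_alphaE t : exists k, forall alpha : R, 0 < alpha ->
  gmop_pdf G g theta alpha lambda t
    = k * alpha `^ theta / mo_denom alpha (H t) `^ (theta + 1).
Proof.
set c := expR (- lambda); set u := expR (- lambda * G t).
have c_neq1 : 1 - c != 0 by apply: subr1_expRN_neq0.
have denomE alpha : 1 - alpha * c - (1 - alpha) * u = (1 - c) * mo_denom alpha (H t).
  by rewrite /mo_denom /poisson_cdf -/c -/u; field.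
exists (theta * lambda * (1 - c) * g t * u * `|u - c| `^ (theta - 1)
        / `|1 - c| `^ (theta + 1)) => alpha alpha_gt0.
have mo_ge0 : 0 <= mo_denom alpha (H t) by rewrite ltW ?mo_denom_gt0 ?H_in01.
rewrite /gmop_pdf /= -/c -/u denomE normrM (ger0_norm mo_ge0).
by rewrite powRM ?normr_ge0 // invfM; ring.
Qed.

Lemma gmop_pdf_ratioE (alpha1 alpha2 t : R) : 0 < alpha1 -> 0 < alpha2 ->
  0 < gmop_pdf G g theta alpha1 lambda t ->
  gmop_pdf G g theta alpha1 lambda t / gmop_pdf G g theta alpha2 lambda t
    = alpha1 `^ theta / alpha2 `^ theta
      * (mo_denom alpha2 (H t) / mo_denom alpha1 (H t)) `^ (theta + 1).
Proof.
move=> alpha1_gt0 alpha2_gt0; have [k pdfE] := gmop_pdf_alphaE t.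
rewrite !pdfE // => f1_gt0.
have k_neq0 : k != 0 by apply: contraTneq f1_gt0 => ->; rewrite !mul0r ltxx.
have mo_gt0 alpha : 0 < alpha -> 0 < mo_denom alpha (H t) `^ (theta + 1).
  by move=> alpha_gt0; rewrite powR_gt0 ?mo_denom_gt0 ?H_in01.
rewrite powR_div ?ltW ?mo_denom_gt0 ?H_in01 //.
by field; apply/and4P; split; rewrite // gt_eqF ?mo_gt0 ?powR_gt0.
Qed.

Lemma gmop_pdf_ratio_nonincreasing (alpha1 alpha2 s t : R) :
  0 < alpha1 -> alpha1 < alpha2 -> 0 < theta -> s <= t ->
  0 < gmop_pdf G g theta alpha1 lambda s -> 0 < gmop_pdf G g theta alpha1 lambda t ->
  gmop_pdf G g theta alpha1 lambda t / gmop_pdf G g theta alpha2 lambda t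
    <= gmop_pdf G g theta alpha1 lambda s / gmop_pdf G g theta alpha2 lambda s.
Proof.
move=> alpha1_gt0 alpha12 theta_gt0 st f1s_gt0 f1t_gt0.
have alpha2_gt0 := lt_trans alpha1_gt0 alpha12.
(* Rewriting unlocalized would unify the pdfs at s and t, unfolding powR: very slow. *)
rewrite [X in X <= _](gmop_pdf_ratioE _ _ _ alpha1_gt0 alpha2_gt0 f1t_gt0).
rewrite [X in _ <= X](gmop_pdf_ratioE _ _ _ alpha1_gt0 alpha2_gt0 f1s_gt0).
apply: ler_wpM2l; first by rewrite divr_ge0 ?powR_ge0.
have ratio_ge0 x : 0 <= mo_denom alpha2 (H x) / mo_denom alpha1 (H x).
  by rewrite divr_ge0 ?ltW ?mo_denom_gt0 ?H_in01.
apply: ge0_ler_powR; rewrite ?nnegrE ?ratio_ge0 //; first by rewrite addr_ge0 ?ltW.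
have [Hs_ge0 _] := andP (H_in01 s); have [_ Ht_le1] := andP (H_in01 t).
apply: mo_denom_ratio_nonincreasing => //; first exact: ltW.
exact/poisson_cdf_nondecreasing/(cdf_with_density_nondecreasing cdfG).
Qed.

End GmopPdf.

Theorem theorem1 (R : realType) (G g : R -> R) (theta lambda alpha1 alpha2 : R) :
  cdf_with_density G g ->
  0 < theta -> lambda != 0 -> 0 < alpha1 -> alpha1 < alpha2 ->
  lr_le (gmop_pdf G g theta alpha1 lambda) (gmop_pdf G g theta alpha2 lambda).
Proof.
move=> cdfG theta_gt0 lambda_neq0 alpha1_gt0 alpha12 s t st f1s_gt0 _ f1t_gt0 _.
exact: gmop_pdf_ratio_nonincreasing.
Qed.
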